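(* Let $\mathsf{Prop}$ be a non-empty finite set of propositions and $\mathsf{L}$ any fragment of $\mathsf{LTL}_P(\mathsf{Prop})$. For every sample $\mathcal{S}=(\mathcal{P},\mathcal{N})$ of Kripke structures in $\mathcal{T}(\mathsf{Prop})$, if there is an $\mathcal{S}$-separating $\mathsf{L}$-formula, then there is one of size at most $2^{n+1}$, where $n:=\sum_{K\in\mathcal{P}\cup\mathcal{N}}|Q_K|$.
   Context: $\mathsf{LTL}$-formulas over $\mathsf{Prop}$ are interpreted on infinite words $w$ over $2^{\mathsf{Prop}}$: $w\models p$ iff $p\in w[0]$; Boolean connectives as usual; $w\models\mathbf{X}\varphi$ iff $w[1:]\models\varphi$; $w\models\mathbf{F}\varphi$ iff $\exists j$, $w[j:]\models\varphi$; $w\models\mathbf{G}\varphi$ iff $\forall j$, $w[j:]\models\varphi$; $w\models\varphi_1\mathbf{U}\varphi_2$ iff $\exists j$, $w[j:]\models\varphi_2$ and $\forall k<j$, $w[k:]\models\varphi_1$. $\mathsf{LTL}_P(\mathsf{Prop})$ is the two-sorted logic (both sorts final) with grammar $\varphi_P::=p\mid\neg\varphi_P\mid\varphi_P\wedge\varphi_P\mid\varphi_P\vee\varphi_P$ and $\varphi::=\varphi_P\mid\varphi\wedge\varphi\mid\varphi_P\vee\varphi\mid\mathbf{X}\varphi\mid\mathbf{G}\varphi\mid\mathbf{F}\varphi_P\mid\varphi\,\mathbf{U}\,\varphi_P$; its formulas are read as $\mathsf{LTL}$-formulas. Its operators are the propositions, the sort-$P$ operators $\neg,\wedge,\vee$,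 and the general-sort operators $\wedge$, $\vee$ (left argument of sort $P$), $\mathbf{X},\mathbf{G},\mathbf{F}$ (argument of sort $P$), $\mathbf{U}$ (right argument of sort $P$); every sort-$P$ formula may be used where a general-sort formula is expected. A fragment is obtained by allowing only a subset of these operators. $\mathsf{sz}(\varphi)$ is the number of distinct subformulas. $\mathcal{T}(\mathsf{Prop})$: Kripke structures $K=(Q,I,\delta,P,\pi)$ with $Q=Q_K$ finite non-empty, $I\subseteq Q$ non-empty, $\delta:Q\to2^Q$ with $\delta(q)\ne\emptyset$ for all $q$, $P\subseteq\mathsf{Prop}$, $\pi:Q\to2^P$. $\mathsf{Paths}(q)$: infinite $\rho\in q\cdot Q^\omega$ with $\rho[i+1]\in\delta(\rho[i])$, read as the word $\pi(\rho[0])\pi(\rho[1])\cdots$. A state $q$ satisfies $\varphi$ if all $\rho\in\mathsf{Paths}(q)$ satisfy $\varphi$; $K\models\varphi$ if all $q\in I$ satisfy $\varphi$. A sample is a pair of finite sets of such structures; a formula is $\mathcal{S}$-separating if satisfied by all structures in $\mathcal{P}$ and by none in $\mathcal{N}$. *)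

From HB Require Import structures.
From mathcomp Require Import all_boot.
From Stdlib Require List.
Set Implicit Arguments.
Unset Strict Implicit.
Unset Printing Implicit Defensive.

Section LTL.
Variable AP : finType.

Inductive ltl : Type :=
| Atom of AP
| Neg of ltl
| And of ltl & ltl
| Or of ltl & ltl
| Next of ltl
| Glob of ltl
| Fut of ltl
| Until of ltl & ltl.

Fixpoint ltl_eqb (f g : ltl) : bool :=
  match f, g with
  | Atom p, Atom q => p == q
  | Neg f1, Neg g1 => ltl_eqb f1 g1
  | And f1 f2, And g1 g2 => ltl_eqb f1 g1 && ltl_eqb f2 g2
  | Or f1 f2, Or g1 g2 => ltl_eqb f1 g1 && ltl_eqb f2 g2
  | Next f1, Next g1 => ltl_eqb f1 g1
  | Glob f1, Glob g1 => ltl_eqb f1 g1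
  | Fut f1, Fut g1 => ltl_eqb f1 g1
  | Until f1 f2, Until g1 g2 => ltl_eqb f1 g1 && ltl_eqb f2 g2
  | _, _ => false
  end.

Lemma ltl_eqP : Equality.axiom ltl_eqb.
Proof.
elim=> [p|f IH|f IHf g IHg|f IHf g IHg|f IH|f IH|f IH|f IHf g IHg] [q|f'|f' g'|f' g'|f'|f'|f'|f' g'] /=;
  try by constructor.
- by apply: (iffP eqP) => [->|[]].
- by apply: (iffP (IH f')) => [->|[]].
- by apply: (iffP andP) => [[/IHf -> /IHg ->]|[<- <-]]; split; [apply/IHf|apply/IHg].
- by apply: (iffP andP) => [[/IHf -> /IHg ->]|[<- <-]]; split; [apply/IHf|apply/IHg].
- by apply: (iffP (IH f')) => [->|[]].
- by apply: (iffP (IH f')) => [->|[]].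
- by apply: (iffP (IH f')) => [->|[]].
- by apply: (iffP andP) => [[/IHf -> /IHg ->]|[<- <-]]; split; [apply/IHf|apply/IHg].
Qed.

HB.instance Definition _ := hasDecEq.Build ltl ltl_eqP.

Definition word := nat -> {set AP}.
Definition suffix (w : word) (j : nat) : word := fun i => w (j + i).

Fixpoint sat (w : word) (f : ltl) : Prop :=
  match f with
  | Atom p => p \in w 0
  | Neg f1 => ~ sat w f1
  | And f1 f2 => sat w f1 /\ sat w f2
  | Or f1 f2 => sat w f1 \/ sat w f2
  | Next f1 => sat (suffix w 1) f1
  | Fut f1 => exists j, sat (suffix w j) f1
  | Glob f1 => forall j, sat (suffix w j) f1
  | Until f1 f2 => exists j, sat (suffix w j) f2 /\
                     forall k, k < j -> sat (suffix w k) f1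
  end.

Fixpoint subformulas (f : ltl) : seq ltl :=
  f :: match f with
       | Atom _ => [::]
       | Neg f1 | Next f1 | Glob f1 | Fut f1 => subformulas f1
       | And f1 f2 | Or f1 f2 | Until f1 f2 => subformulas f1 ++ subformulas f2
       end.

Definition sz (f : ltl) : nat := size (undup (subformulas f)).

Inductive op : Type :=
| OAtom of AP
| PNeg
| PAnd
| POr
| GAnd
| GOr
| GNext
| GGlob
| GFut
| GUntil.

(* A fragment is given by a set of allowed operators L.
   inP L f : f is derivable as a sort-P formula using operators of L.
   inG L f : f is derivable as a general-sort formula using operators of L. *)
Inductive inP (L : op -> Prop) : ltl -> Prop :=
| inP_atom p : L (OAtom p) -> inP L (Atom p)
| inP_neg f : L PNeg -> inP L f -> inP L (Neg f)
| inP_and f g : L PAnd -> inP L f -> inP L g -> inP L (And f g)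
| inP_or f g : L POr -> inP L f -> inP L g -> inP L (Or f g).

Inductive inG (L : op -> Prop) : ltl -> Prop :=
| inG_P f : inP L f -> inG L f
| inG_and f g : L GAnd -> inG L f -> inG L g -> inG L (And f g)
| inG_or f g : L GOr -> inP L f -> inG L g -> inG L (Or f g)
| inG_next f : L GNext -> inG L f -> inG L (Next f)
| inG_glob f : L GGlob -> inG L f -> inG L (Glob f)
| inG_fut f : L GFut -> inP L f -> inG L (Fut f)
| inG_until f g : L GUntil -> inG L f -> inP L g -> inG L (Until f g).

(* L-formula: formula of either sort (both final); every sort-P formula
   is a general-sort formula via inG_P. *)
Definition in_fragment (L : op -> Prop) (f : ltl) : Prop := inG L f.

Record kripke : Type := Kripke {
  KQ : finType;
  KI : {set KQ};
  Kdelta : KQ -> {set KQ};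
  KP : {set AP};
  Kpi : KQ -> {set AP};
  KI_ne : KI != set0;
  Kdelta_ne : forall q, Kdelta q != set0;
  Kpi_sub : forall q, Kpi q \subset KP
}.

Definition is_path (K : kripke) (q : KQ K) (rho : nat -> KQ K) : Prop :=
  rho 0 = q /\ forall i, rho i.+1 \in Kdelta (rho i).

Definition path_word (K : kripke) (rho : nat -> KQ K) : word :=
  fun i => Kpi (rho i).

Definition state_sat (K : kripke) (q : KQ K) (f : ltl) : Prop :=
  forall rho, is_path q rho -> sat (path_word rho) f.

Definition kripke_sat (K : kripke) (f : ltl) : Prop :=
  forall q, q \in KI K -> state_sat q f.

(* A sample is a pair of finite sets of structures (given as duplicate-free lists). *)
Definition separating (Pos Neg : seq kripke) (f : ltl) : Prop :=
  (forall K, List.In K Pos -> kripke_sat K f) /\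
  (forall K, List.In K Neg -> ~ kripke_sat K f).

End LTL.

From Pilot Require Import Defs.
From mathcomp Require Import all_boot boolp.
From Stdlib Require List.
Set Implicit Arguments.
Unset Strict Implicit.
Unset Printing Implicit Defensive.

(* Among the separating L-formulas choose one, f, of minimal [code], an
   injective numbering of formulas that decreases when a subformula is
   replaced by one of smaller code.  In LTL_P the universal semantics on
   states is compositional: disjunction, F and the right argument of U only
   take propositional arguments, whose truth at a state depends on its label
   alone, so the states satisfying a formula are determined by the states
   satisfying its immediate subformulas.  Hence if two distinct subformulas of
   f hold at the same states of the sample and are both, or neither, of sort P,
   replacing the one of larger code by the other everywhere yields a smaller
   separating L-formula.  So distinct subformulas of f have distinct such
   "keys", of which there are 2^n * 2. *)

Section PropositionalFormulas.
Variable AP : finType.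
Implicit Types (f : ltl AP) (w : word AP).

Fixpoint is_prop f : bool :=
  match f with
  | Atom _ => true
  | Neg a => is_prop a
  | And a b | Or a b => is_prop a && is_prop b
  | _ => false
  end.

Fixpoint eval_prop (s : {set AP}) f : bool :=
  match f with
  | Atom p => p \in s
  | Neg a => ~~ eval_prop s a
  | And a b => eval_prop s a && eval_prop s b
  | Or a b => eval_prop s a || eval_prop s b
  | _ => false
  end.

Lemma inP_prop (L : op AP -> Prop) f : inP L f -> is_prop f.
Proof. by elim=> //= a b _ _ -> _ ->. Qed.

Lemma sat_prop w f : is_prop f -> sat w f <-> eval_prop (w 0) f.
Proof.
elim: f => //= [a IH | a IHa b IHb | a IHa b IHb]
  => [/IH -> | /andP[/IHa -> /IHb ->] | /andP[/IHa -> /IHb ->]].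
- exact: rwP negP.
- exact: rwP andP.
- exact: rwP orP.
Qed.

End PropositionalFormulas.

Section PathSemantics.
Variables (AP : finType) (K : kripke AP).
Implicit Types (q : KQ K) (rho pi : nat -> KQ K) (f : ltl AP).

Definition shift rho j : nat -> KQ K := fun i => rho (j + i).

Definition splice rho pi j : nat -> KQ K :=
  fun i => if i < j then rho i else pi (i - j).

Lemma path_word_shift rho j :
  path_word (shift rho j) = Defs.suffix (path_word rho) j.
Proof. by []. Qed.

Lemma is_path_shift q rho j : is_path q rho -> is_path (rho j) (shift rho j).
Proof. by case=> _ step; split=> [|i]; rewrite /shift ?addn0 ?addnS. Qed.

Lemma is_path_splice q rho pi j :
  is_path q rho -> is_path (rho j) pi -> is_path q (splice rho pi j).
Proof.
case=> rho0 rho_step [pi0 pi_step]; split=> [|i]; rewrite /splice.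
  by case: j pi0 => [|j] //= ->.
case: (ltngtP i.+1 j) => [lt_ij | lt_ji | eq_ij].
- exact: rho_step.
- by rewrite subSn.
- by rewrite -eq_ij subnn pi0 -eq_ij.
Qed.

Lemma splice_le rho pi j i : pi 0 = rho j -> i <= j -> splice rho pi j i = rho i.
Proof.
rewrite /splice leq_eqVlt => pi0 /orP[/eqP ->|->] //.
by rewrite ltnn subnn.
Qed.

Lemma shift_splice rho pi j : shift (splice rho pi j) j = pi.
Proof. by apply: funext => i; rewrite /shift /splice ltnNge leq_addr addKn. Qed.

Lemma path_exists q : exists rho, is_path q rho.
Proof.
have [next next_step] : exists next : KQ K -> KQ K, forall x, next x \in Kdelta x.
  exists (fun x => odflt x [pick y in Kdelta x]) => x.
  by case: pickP => [//|none]; case/set0Pn: (Kdelta_ne x) => y; rewrite none.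
by exists (fun i => iter i next q); split=> // i; rewrite iterS.
Qed.

Lemma state_sat_suffix q j f :
  (forall rho, is_path q rho -> sat (Defs.suffix (path_word rho) j) f) <->
  (forall rho, is_path q rho -> state_sat (rho j) f).
Proof.
split=> sat_f rho path_rho; last first.
  by rewrite -path_word_shift; apply: sat_f (is_path_shift j path_rho).
move=> pi path_pi; have := sat_f _ (is_path_splice path_rho path_pi).
by rewrite -path_word_shift shift_splice.
Qed.

Lemma state_sat_prop q f : is_prop f -> state_sat q f <-> eval_prop (Kpi q) f.
Proof.
move=> pf; split=> [sat_f | eval_f rho [rho0 _]]; last first.
  by rewrite sat_prop // /path_word rho0.
have [rho path_rho] := path_exists q.
by move: (sat_f rho path_rho); rewrite sat_prop // /path_word; case: path_rho => ->.
Qed.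

Lemma state_sat_and q a b :
  state_sat q (And a b) <-> state_sat q a /\ state_sat q b.
Proof.
split=> [sat_ab | [sat_a sat_b] rho path_rho]; last by split; [apply: sat_a | apply: sat_b].
by split=> rho path_rho; case: (sat_ab rho path_rho).
Qed.

Lemma state_sat_or q a b : is_prop a ->
  state_sat q (Or a b) <-> eval_prop (Kpi q) a \/ state_sat q b.
Proof.
move=> pa; split=> [sat_ab | [eval_a | sat_b] rho path_rho /=]; last 2 first.
- by left; rewrite sat_prop // /path_word; case: path_rho => ->.
- by right; apply: sat_b.
have [eval_a | not_a] := boolP (eval_prop (Kpi q) a); [by left | right].
move=> rho path_rho.
have [|//] : sat (path_word rho) a \/ sat (path_word rho) b := sat_ab rho path_rho.
by rewrite sat_prop // /path_word; case: path_rho => -> _; rewrite (negbTE not_a).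
Qed.

Lemma state_sat_next q a :
  state_sat q (Next a) <-> forall rho, is_path q rho -> state_sat (rho 1) a.
Proof. exact: state_sat_suffix. Qed.

Lemma state_sat_glob q a :
  state_sat q (Glob a) <-> forall j rho, is_path q rho -> state_sat (rho j) a.
Proof.
split=> [sat_a j | sat_a rho path_rho j].
  by apply/state_sat_suffix => rho path_rho; apply: sat_a.
by apply: (proj2 (state_sat_suffix q j a) (sat_a j)).
Qed.

Lemma state_sat_fut q a : is_prop a ->
  state_sat q (Fut a) <->
  forall rho, is_path q rho -> exists j, eval_prop (Kpi (rho j)) a.
Proof.
move=> pa; split=> sat_a rho path_rho.
- have [j] : exists j, sat (Defs.suffix (path_word rho) j) a := sat_a rho path_rho.
  by rewrite sat_prop // /Defs.suffix /path_word addn0; exists j.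
- have [j a_j] := sat_a rho path_rho; exists j.
  by rewrite sat_prop // /Defs.suffix /path_word addn0.
Qed.

Lemma state_sat_until q a b : is_prop b ->
  state_sat q (Until a b) <->
  forall rho, is_path q rho ->
    exists j, eval_prop (Kpi (rho j)) b /\ forall k, k < j -> state_sat (rho k) a.
Proof.
move=> pb; split=> sat_ab rho path_rho; last first.
  have [j [b_j a_before]] := sat_ab rho path_rho; exists j; split.
    by rewrite sat_prop // /Defs.suffix /path_word addn0.
  by move=> k lt_kj; rewrite -path_word_shift; apply: a_before (is_path_shift k path_rho).
have {}sat_ab pi : is_path q pi -> exists j, eval_prop (Kpi (pi j)) b /\
    forall k, k < j -> sat (Defs.suffix (path_word pi) k) a.
  move=> /sat_ab /= [j [b_j a_before]]; exists j; split=> //.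
  by move: b_j; rewrite sat_prop // /Defs.suffix /path_word addn0.
have ex_b : exists j, eval_prop (Kpi (rho j)) b.
  by have [j [b_j _]] := sat_ab rho path_rho; exists j.
(* The first b-position j0 works: a path from rho k, k < j0, spliced into rho
   at k does not meet b before position k. *)
have [j0 b_j0 min_j0] := ex_minnP ex_b.
exists j0; split=> // k lt_kj0 pi path_pi.
have [j [b_j a_before]] := sat_ab _ (is_path_splice path_rho path_pi).
have lt_kj : k < j.
  rewrite ltnNge; apply/negP => le_jk.
  move: b_j; rewrite splice_le //; last by case: path_pi.
  by move/min_j0/leq_trans/(_ le_jk); rewrite leqNgt lt_kj0.
by have := a_before k lt_kj; rewrite -path_word_shift shift_splice.
Qed.

Definition state_equiv f f' := forall q, state_sat q f <-> state_sat q f'.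

Lemma state_equiv_prop a a' : is_prop a -> is_prop a' ->
  state_equiv a a' <-> forall q, eval_prop (Kpi q) a = eval_prop (Kpi q) a'.
Proof.
move=> pa pa'; split=> equiv_a q; last by rewrite !state_sat_prop // equiv_a.
by apply/idP/idP; rewrite -!state_sat_prop //; apply equiv_a.
Qed.

End PathSemantics.

Section SubformulaClosure.
Variables (AP : finType) (L : op AP -> Prop).

Lemma inP_sub f s : inP L f -> s \in subformulas f -> inP L s.
Proof.
elim=> {f} [p Lop | a Lop Pa IHa | a b Lop Pa IHa Pb IHb | a b Lop Pa IHa Pb IHb] /=.
- by rewrite inE => /eqP ->; apply: inP_atom.
- by rewrite in_cons => /predU1P [-> | /IHa //]; apply: inP_neg.
- by rewrite in_cons mem_cat => /predU1P [-> | /orP [/IHa | /IHb] //]; apply: inP_and.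
- by rewrite in_cons mem_cat => /predU1P [-> | /orP [/IHa | /IHb] //]; apply: inP_or.
Qed.

Lemma inG_sub f s : inG L f -> s \in subformulas f -> inG L s.
Proof.
elim=> {f} [f Pf | a b Lop Ga IHa Gb IHb | a b Lop Pa Gb IHb | a Lop Ga IHa
  | a Lop Ga IHa | a Lop Pa | a b Lop Ga IHa Pb] /=.
- by move/(inP_sub Pf); apply: inG_P.
- by rewrite in_cons mem_cat => /predU1P [-> | /orP [/IHa | /IHb] //]; apply: inG_and.
- rewrite in_cons mem_cat => /predU1P [-> | /orP [/(inP_sub Pa) | /IHb] //].
    exact: inG_or.
  exact: inG_P.
- by rewrite in_cons => /predU1P [-> | /IHa //]; apply: inG_next.
- by rewrite in_cons => /predU1P [-> | /IHa //]; apply: inG_glob.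
- rewrite in_cons => /predU1P [-> | /(inP_sub Pa)]; first exact: inG_fut.
  exact: inG_P.
- rewrite in_cons mem_cat => /predU1P [-> | /orP [/IHa // | /(inP_sub Pb)]].
    exact: inG_until.
  exact: inG_P.
Qed.

End SubformulaClosure.

(* Injective and strictly increasing in both arguments, which makes [code]
   below decrease under [replace_sub]. *)
Definition pair_code a b := 2 ^ a * 3 ^ b.

Lemma pair_code_inj a b c d : pair_code a b = pair_code c d -> a = c /\ b = d.
Proof.
have log2 x y : logn 2 (pair_code x y) = x.
  by rewrite lognM ?expn_gt0 // pfactorK // lognX (_ : logn 2 3 = 0) ?muln0 ?addn0.
have log3 x y : logn 3 (pair_code x y) = y.
  by rewrite lognM ?expn_gt0 // pfactorK // lognX (_ : logn 3 2 = 0) ?muln0.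
move=> eq_code; split.
  by rewrite -(log2 a b) eq_code log2.
by rewrite -(log3 a b) eq_code log3.
Qed.

Lemma leq_pair_code a a' b b' :
  a <= a' -> b <= b' -> pair_code a b <= pair_code a' b'.
Proof. by move=> le_a le_b; rewrite leq_mul // leq_pexp2l. Qed.

Lemma ltn_pair_codel a a' b b' :
  a < a' -> b <= b' -> pair_code a b < pair_code a' b'.
Proof.
move=> lt_a le_b; apply: leq_trans (leq_pair_code (leqnn a') le_b).
by rewrite ltn_pmul2r ?expn_gt0 // ltn_exp2l.
Qed.

Lemma ltn_pair_coder a a' b b' :
  a <= a' -> b < b' -> pair_code a b < pair_code a' b'.
Proof.
move=> le_a lt_b; apply: leq_trans (leq_pair_code le_a (leqnn b')).
by rewrite ltn_pmul2l ?expn_gt0 // ltn_exp2l.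
Qed.

Section Code.
Variable AP : finType.

Fixpoint code (f : ltl AP) : nat :=
  match f with
  | Atom p => pair_code 0 (enum_rank p)
  | Neg a => pair_code 1 (code a)
  | And a b => pair_code 2 (pair_code (code a) (code b))
  | Or a b => pair_code 3 (pair_code (code a) (code b))
  | Next a => pair_code 4 (code a)
  | Glob a => pair_code 5 (code a)
  | Fut a => pair_code 6 (code a)
  | Until a b => pair_code 7 (pair_code (code a) (code b))
  end.

Lemma code_inj : injective code.
Proof.
elim=> [p|a IH|a IHa b IHb|a IHa b IHb|a IH|a IH|a IH|a IHa b IHb]
  [p'|a'|a' b'|a' b'|a'|a'|a'|a' b'] /= /pair_code_inj [] //.
- by move=> _ /val_inj/enum_rank_inj ->.
- by move=> _ /IH ->.
- by move=> _ /pair_code_inj [/IHa -> /IHb ->].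
- by move=> _ /pair_code_inj [/IHa -> /IHb ->].
- by move=> _ /IH ->.
- by move=> _ /IH ->.
- by move=> _ /IH ->.
- by move=> _ /pair_code_inj [/IHa -> /IHb ->].
Qed.

End Code.

Section Replacement.
Variables (AP : finType) (g h : ltl AP).

Fixpoint replace_sub (f : ltl AP) : ltl AP :=
  if f == g then h else
  match f with
  | Atom p => Atom p
  | Neg a => Neg (replace_sub a)
  | And a b => And (replace_sub a) (replace_sub b)
  | Or a b => Or (replace_sub a) (replace_sub b)
  | Next a => Next (replace_sub a)
  | Glob a => Glob (replace_sub a)
  | Fut a => Fut (replace_sub a)
  | Until a b => Until (replace_sub a) (replace_sub b)
  end.

Lemma code_replace_sub_le f : code h <= code g -> code (replace_sub f) <= code f.
Proof.
move=> le_hg; elim: f => [p|a IH|a IHa b IHb|a IHa b IHb|a IH|a IH|a IH|a IHa b IHb];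
  rewrite [replace_sub _]/=; case: eqP => [-> // | _] /=; rewrite ?leq_pair_code //.
Qed.

Lemma code_replace_sub_lt f : code h < code g -> g \in subformulas f ->
  code (replace_sub f) < code f.
Proof.
move=> lt_hg; have le_r f' := code_replace_sub_le f' (ltnW lt_hg).
elim: f => [p|a IH|a IHa b IHb|a IHa b IHb|a IH|a IH|a IH|a IHa b IHb];
  rewrite [replace_sub _]/= in_cons (eq_sym g); case: eqP => [-> // | _] /=;
  rewrite ?mem_cat //.
1,4-6: by move/IH; apply: ltn_pair_coder.
all: by case/orP=> [/IHa | /IHb] lt_r; apply: ltn_pair_coder => //;
  [apply: ltn_pair_codel | apply: ltn_pair_coder].
Qed.

Variable L : op AP -> Prop.
Hypothesis inP_gh : inP L g -> inP L h.

Lemma inP_replace_sub f : inP L f -> inP L (replace_sub f).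
Proof.
elim=> {f} [p Lop | a Lop Pa IHa | a b Lop Pa IHa Pb IHb | a b Lop Pa IHa Pb IHb];
  rewrite [replace_sub _]/=; case: eqP => [eq_fg | _];
  by [apply: inP_gh; rewrite -eq_fg; constructor | constructor].
Qed.

Lemma inG_replace_sub f : inG L h -> inG L f -> inG L (replace_sub f).
Proof.
move=> Gh; elim=> {f} [f Pf | a b Lop _ Ga _ Gb | a b Lop Pa _ Gb | a Lop _ Ga
  | a Lop _ Ga | a Lop Pa | a b Lop _ Ga Pb].
  by constructor; apply: inP_replace_sub.
all: rewrite [replace_sub _]/=; case: eqP => // _.
- exact: inG_and.
- by apply: inG_or => //; apply: inP_replace_sub.
- exact: inG_next.
- exact: inG_glob.
- by apply: inG_fut => //; apply: inP_replace_sub.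
- by apply: inG_until => //; apply: inP_replace_sub.
Qed.

Section StateSemantics.
Variable K : kripke AP.
Hypothesis equiv_gh : state_equiv K g h.

Lemma eval_replace_sub f : inP L f ->
  forall q : KQ K, eval_prop (Kpi q) (replace_sub f) = eval_prop (Kpi q) f.
Proof.
have eval_gh (q : KQ K) : inP L g -> eval_prop (Kpi q) h = eval_prop (Kpi q) g.
  move=> Pg; have Ph := inP_gh Pg.
  by rewrite (proj1 (state_equiv_prop K (inP_prop Pg) (inP_prop Ph)) equiv_gh).
move=> Pf q; elim: Pf => {f}
    [p Lop | a Lop Pa IHa | a b Lop Pa IHa Pb IHb | a b Lop Pa IHa Pb IHb];
  rewrite [replace_sub _]/=; case: eqP => [eq_fg | _];
  by [rewrite eq_fg; apply: eval_gh; rewrite -eq_fg; constructor | rewrite /= ?IHa ?IHb].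
Qed.

Lemma state_equiv_replace_sub f : inG L f -> state_equiv K f (replace_sub f).
Proof.
elim=> {f} [f Pf | a b Lop _ IHa _ IHb | a b Lop Pa _ IHb | a Lop _ IHa
  | a Lop _ IHa | a Lop Pa | a b Lop _ IHa Pb].
  apply/(state_equiv_prop K (inP_prop Pf) (inP_prop (inP_replace_sub Pf))) => q.
  by rewrite eval_replace_sub.
all: rewrite [replace_sub _]/=; case: eqP => [-> // | _] q.
- by rewrite !state_sat_and (IHa q) (IHb q).
- have pa := inP_prop Pa; have pa' := inP_prop (inP_replace_sub Pa).
  by rewrite !state_sat_or // (eval_replace_sub Pa) (IHb q).
- by rewrite !state_sat_next; split=> next_a rho path_rho; apply/IHa; apply: next_a.
- by rewrite !state_sat_glob; split=> glob_a j rho path_rho; apply/IHa; apply: glob_a.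
- have pa := inP_prop Pa; have pa' := inP_prop (inP_replace_sub Pa).
  rewrite !state_sat_fut //; split=> fut_a rho /fut_a [j a_j]; exists j;
    by move: a_j; rewrite (eval_replace_sub Pa).
- have pb := inP_prop Pb; have pb' := inP_prop (inP_replace_sub Pb).
  rewrite !state_sat_until //; split=> until_ab rho /until_ab [j [b_j a_before]];
    exists j; split=> [|k /a_before]; by [move: b_j; rewrite (eval_replace_sub Pb) | move/IHa].
Qed.

End StateSemantics.

End Replacement.

Lemma In_ord_nth (T : Type) (x0 : T) (s : seq T) x :
  List.In x s -> exists i : 'I_(size s), nth x0 s i = x.
Proof.
elim: s => //= y s IH [<- | /IH [i <-]]; first by exists ord0.
by exists (lift ord0 i).
Qed.

Lemma setT_unit_neq0 : [set: unit] != set0.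
Proof. by rewrite -card_gt0 cardsT card_unit. Qed.

Section SampleKeys.
Variables (AP : finType) (L : op AP -> Prop) (S : seq (kripke AP)).

Definition sample_equiv (f f' : ltl AP) :=
  forall K, List.In K S -> state_equiv K f f'.

(* Only the default element of [nth]. *)
Definition unit_kripke : kripke AP :=
  Kripke setT_unit_neq0 (fun=> setT_unit_neq0) (fun=> sub0set (set0 : {set AP})).

Definition sample_state := {i : 'I_(size S) & KQ (nth unit_kripke S i)}.

Definition key (f : ltl AP) : {ffun sample_state -> bool} * bool :=
  ([ffun s => `[< state_sat (tagged s) f >]], `[< inP L f >]).

Lemma card_key : #|{: {ffun sample_state -> bool} * bool}| = 2 ^ (\sum_(K <- S) #|KQ K|).+1.
Proof.
rewrite card_prod card_ffun card_bool expnS mulnC card_tagged sumnE big_map big_enum.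
by rewrite (big_nth unit_kripke) big_mkord.
Qed.

Lemma key_sample_equiv f f' : key f = key f' -> sample_equiv f f'.
Proof.
case=> /ffunP eq_sat _ K /(In_ord_nth unit_kripke) [i <-] q.
by apply: asbool_eq_equiv; have := eq_sat (existT _ i q); rewrite !ffunE.
Qed.

Lemma key_inP f f' : key f = key f' -> inP L f -> inP L f'.
Proof. by case=> _ eq_P; apply: (iffLR (asbool_eq_equiv eq_P)). Qed.

End SampleKeys.

Lemma separating_equiv (AP : finType) (Pos Neg : seq (kripke AP)) f f' :
  sample_equiv (Pos ++ Neg) f f' -> separating Pos Neg f -> separating Pos Neg f'.
Proof.
move=> equiv_f [sat_pos sat_neg].
have sat_equiv K : List.In K (Pos ++ Neg) -> kripke_sat K f <-> kripke_sat K f'.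
  by move=> SK; split=> sat_K q Iq; apply/(equiv_f K SK); apply: sat_K.
split=> [K PK | K NK].
  by apply/sat_equiv; [apply: List.in_or_app; left | apply: sat_pos].
by rewrite -sat_equiv; [apply: sat_neg | apply: List.in_or_app; right].
Qed.

Section MinimalSeparating.
Variables (AP : finType) (L : op AP -> Prop) (Pos Neg : seq (kripke AP)).
Variable f : ltl AP.
Hypotheses (Gf : inG L f) (sep_f : separating Pos Neg f).
Hypothesis min_f : forall f', inG L f' -> separating Pos Neg f' -> code f <= code f'.

Local Notation key := (key L (Pos ++ Neg)).

Lemma key_inj_subformulas : {in subformulas f &, injective key}.
Proof.
suff no_smaller x y : x \in subformulas f -> y \in subformulas f ->
    key x = key y -> code y < code x -> False.
  move=> x y fx fy eq_key; case: (ltngtP (code x) (code y)) => [lt_xy | lt_yx | /code_inj //].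
    by case: (no_smaller y x fy fx (esym eq_key) lt_xy).
  by case: (no_smaller x y fx fy eq_key lt_yx).
move=> fx fy eq_key lt_yx.
have inP_xy := key_inP eq_key.
have G_f' : inG L (replace_sub x y f) := inG_replace_sub inP_xy (inG_sub Gf fy) Gf.
have sep_f' : separating Pos Neg (replace_sub x y f).
  apply: separating_equiv sep_f => K SK.
  exact: (state_equiv_replace_sub inP_xy (key_sample_equiv eq_key SK) Gf).
by have := min_f G_f' sep_f'; rewrite leqNgt code_replace_sub_lt.
Qed.

Lemma sz_minimal_separating : sz f <= 2 ^ (\sum_(K <- Pos ++ Neg) #|KQ K|).+1.
Proof.
have uniq_keys : uniq (map key (undup (subformulas f))).
  rewrite map_inj_in_uniq ?undup_uniq // => x y.
  by rewrite !mem_undup; apply: key_inj_subformulas.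
by rewrite /sz -(size_map key) -card_key -(card_uniqP uniq_keys) max_card.
Qed.

End MinimalSeparating.

Theorem corollary3 (AP : finType) (AP_ne : 0 < #|AP|)
  (L : op AP -> Prop) (Pos Neg : seq (kripke AP)) :
  List.NoDup Pos -> List.NoDup Neg ->
  (exists f, in_fragment L f /\ separating Pos Neg f) ->
  exists f, in_fragment L f /\ separating Pos Neg f /\
    sz f <= 2 ^ (\sum_(K <- Pos ++ Neg) #|KQ K|).+1.
Proof.
move=> _ _ [f0 [G_f0 sep_f0]].
pose separating_code n := `[< exists f, [/\ code f = n, inG L f & separating Pos Neg f] >].
have ex_code : exists n, separating_code n by exists (code f0); apply/asboolP; exists f0.
have [n /asboolP [f [code_f G_f sep_f]] min_n] := ex_minnP ex_code.
exists f; split=> //; split=> //; apply: (sz_minimal_separating G_f sep_f) => f' G_f' sep_f'.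
by rewrite code_f; apply: min_n; apply/asboolP; exists f'.
Qed.
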